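(* Let $0<\omega\le\pi/2$, let $Q$ be a convex polygon, let $\mathcal{W}$ be a nonempty family of $\omega$-wedges each of which contains $Q$, and let $F_Q=\bigcap_{W\in\mathcal{W}} W$. Let $e$ be an edge of $Q$, let $H_e$ be the closed half-plane whose boundary line $\ell_e$ contains $e$ and which does not contain the interior of $Q$, and let $F_{Q,e}=F_Q\cap H_e$. If $F_{Q,e}\not\subseteq \ell_e$, then $F_{Q,e}$ contains a (nondegenerate) triangle one of whose sides is $e$.
   Context: An $\omega$-wedge with apex $q$ is the closed region bounded by two rays emanating from $q$ that form the angle $\omega$, together with all points between them. *)

From Stdlib Require Import Reals Lra List.
Import ListNotations.
Open Scope R_scope.

Definition point := (R * R)%type.

(* cross product of (b - a) and (c - a): > 0 iff c is strictly left of the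
   directed line a -> b *)
Definition orient (a b c : point) : R :=
  (fst b - fst a) * (snd c - snd a) - (snd b - snd a) * (fst c - fst a).

(* The omega-wedge with apex q whose first bounding ray has direction angle
   theta and whose second ray has direction angle theta + omega
   (for 0 < omega < pi this is exactly the closed region between the two rays). *)
Definition in_wedge (omega : R) (q : point) (theta : R) (p : point) : Prop :=
  exists s t : R, 0 <= s /\ 0 <= t /\
    fst p = fst q + s * cos theta + t * cos (theta + omega) /\
    snd p = snd q + s * sin theta + t * sin (theta + omega).

Definition vtx (vs : list point) (i : nat) : point := nth i vs (0, 0).
Definition vnext (vs : list point) (i : nat) : point :=
  nth (S i mod length vs) vs (0, 0).

(* vs lists the vertices of a convex polygon in counterclockwise order:
   at least 3 vertices, and every vertex other than the endpoints of an
   edge lies strictly to the left of that (directed) edge. *)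
Definition convex_polygon (vs : list point) : Prop :=
  (3 <= length vs)%nat /\
  forall i j : nat, (i < length vs)%nat -> (j < length vs)%nat ->
    j <> i -> j <> (S i mod length vs)%nat ->
    orient (vtx vs i) (vnext vs i) (vtx vs j) > 0.

Definition in_polygon (vs : list point) (p : point) : Prop :=
  exists ws : list R,
    length ws = length vs /\ Forall (fun w => 0 <= w) ws /\
    fold_right Rplus 0 ws = 1 /\
    fst p = fold_right Rplus 0 (map (fun wv => fst wv * fst (snd wv)) (combine ws vs)) /\
    snd p = fold_right Rplus 0 (map (fun wv => fst wv * snd (snd wv)) (combine ws vs)).

Definition comb3 (a b c : R) (x y z : point) : point :=
  (a * fst x + b * fst y + c * fst z, a * snd x + b * snd y + c * snd z).

(* F_Q is an intersection of wedges, hence convex; it contains Q and so both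
   endpoints of e.  Any point c of F_{Q,e} off the line l_e therefore spans
   with e a triangle inside F_Q, and that triangle lies in H_e because the
   orientation with respect to e is affine, vanishing on e and nonpositive
   at c. *)
From Stdlib Require Import Reals List Lra Lia.
Open Scope R_scope.

Lemma sum_repeat0 (n : nat) : fold_right Rplus 0 (repeat 0 n) = 0.
Proof. induction n as [|n IH]; simpl; lra. Qed.

Lemma weighted_sums_repeat0 (vs : list point) :
  fold_right Rplus 0
    (map (fun wv => fst wv * fst (snd wv)) (combine (repeat 0 (length vs)) vs)) = 0 /\
  fold_right Rplus 0
    (map (fun wv => fst wv * snd (snd wv)) (combine (repeat 0 (length vs)) vs)) = 0.
Proof.
  induction vs as [|x vs [IH1 IH2]]; simpl; [lra|].
  rewrite IH1, IH2; lra.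
Qed.

Lemma nth_in_polygon (vs : list point) (k : nat) :
  (k < length vs)%nat -> in_polygon vs (nth k vs (0, 0)).
Proof.
  unfold in_polygon; revert k.
  induction vs as [|x vs IH]; intros [|k] Hk; simpl in Hk; try lia.
  - exists (1 :: repeat 0 (length vs)); simpl.
    destruct (weighted_sums_repeat0 vs) as [E1 E2].
    rewrite repeat_length, sum_repeat0, E1, E2.
    repeat split; try lra.
    constructor; [lra|].
    apply Forall_forall; intros y Hy; apply repeat_spec in Hy; lra.
  - destruct (IH k ltac:(lia)) as [ws [L [F [S [E1 E2]]]]].
    exists (0 :: ws); simpl; rewrite L, S, <- E1, <- E2.
    repeat split; try lra.
    constructor; [lra | exact F].
Qed.

Lemma vtx_in_polygon (vs : list point) (i : nat) :
  (i < length vs)%nat -> in_polygon vs (vtx vs i).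
Proof. exact (nth_in_polygon vs i). Qed.

Lemma vnext_in_polygon (vs : list point) (i : nat) :
  vs <> nil -> in_polygon vs (vnext vs i).
Proof.
  intros Hvs; apply nth_in_polygon, Nat.mod_upper_bound.
  now destruct vs.
Qed.

Lemma in_wedge_comb3 (omega : R) (q : point) (theta a b d : R) (x y z : point) :
  0 <= a -> 0 <= b -> 0 <= d -> a + b + d = 1 ->
  in_wedge omega q theta x -> in_wedge omega q theta y -> in_wedge omega q theta z ->
  in_wedge omega q theta (comb3 a b d x y z).
Proof.
  intros Ha Hb Hd Hs [s1 [t1 [S1 [T1 [X1 Y1]]]]] [s2 [t2 [S2 [T2 [X2 Y2]]]]]
    [s3 [t3 [S3 [T3 [X3 Y3]]]]].
  exists (a * s1 + b * s2 + d * s3), (a * t1 + b * t2 + d * t3).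
  unfold comb3; simpl; rewrite X1, Y1, X2, Y2, X3, Y3.
  replace d with (1 - a - b) by lra.
  repeat split; try nra; ring.
Qed.

Definition in_all_wedges (omega : R) (W : point -> R -> Prop) (p : point) : Prop :=
  forall q theta, W q theta -> in_wedge omega q theta p.

Lemma in_all_wedges_comb3 (omega : R) (W : point -> R -> Prop) (a b d : R)
    (x y z : point) :
  0 <= a -> 0 <= b -> 0 <= d -> a + b + d = 1 ->
  in_all_wedges omega W x -> in_all_wedges omega W y -> in_all_wedges omega W z ->
  in_all_wedges omega W (comb3 a b d x y z).
Proof.
  intros Ha Hb Hd Hs Hx Hy Hz q theta HW.
  apply in_wedge_comb3; auto.
Qed.

Lemma orient_comb3 (v w c : point) (a b d : R) :
  a + b + d = 1 -> orient v w (comb3 a b d v w c) = d * orient v w c.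
Proof.
  intros Hs; unfold orient, comb3; simpl.
  replace a with (1 - b - d) by lra; ring.
Qed.

Theorem lemma3p5 (omega : R) (vs : list point) (W : point -> R -> Prop) (i : nat) :
  0 < omega -> omega <= PI / 2 ->
  convex_polygon vs ->
  (exists q theta, W q theta) ->
  (forall q theta, W q theta ->
     forall p, in_polygon vs p -> in_wedge omega q theta p) ->
  (i < length vs)%nat ->
  (exists p, (forall q theta, W q theta -> in_wedge omega q theta p) /\
             orient (vtx vs i) (vnext vs i) p <= 0 /\
             orient (vtx vs i) (vnext vs i) p <> 0) ->
  exists c : point,
    orient (vtx vs i) (vnext vs i) c <> 0 /\
    forall a b d : R, 0 <= a -> 0 <= b -> 0 <= d -> a + b + d = 1 ->
      let p := comb3 a b d (vtx vs i) (vnext vs i) c in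
      (forall q theta, W q theta -> in_wedge omega q theta p) /\
      orient (vtx vs i) (vnext vs i) p <= 0.
Proof.
  intros _ _ _ _ HQ Hi [c [Hc [Hle Hne]]].
  assert (Hvs : vs <> nil) by (intros ->; simpl in Hi; lia).
  exists c; split; [exact Hne |].
  intros a b d Ha Hb Hd Hs; simpl; split.
  - apply (in_all_wedges_comb3 omega W); try assumption;
      intros q theta HW; apply (HQ q theta HW).
    + now apply vtx_in_polygon.
    + now apply vnext_in_polygon.
  - rewrite orient_comb3 by exact Hs; nra.
Qed.
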